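(* Let $n\ge1$ and $1\le m\le\lfloor n/2\rfloor$. For every $l\in\{0,1,\dots,m-1\}$, $$\bigl|\{\pi\in\mathfrak{S}_n:{\rm altmaj}(\pi)\equiv l \pmod{2m}\}\bigr|=\bigl|\{\pi\in\mathfrak{S}_n:{\rm altmaj}(\pi)\equiv l+m \pmod{2m}\}\bigr|.$$ Consequently, $1+q^m$ divides $\sum_{\pi\in\mathfrak{S}_n}q^{{\rm altmaj}(\pi)}$ for $1\le m\le \lfloor n/2\rfloor$.
   Context: $\mathfrak{S}_n$ is the set of permutations $\pi=\pi_1\cdots\pi_n$ of $\{1,\dots,n\}$; $\widehat{D}(\pi)=\{2i:\pi_{2i}<\pi_{2i+1}\}\cup\{2i+1:\pi_{2i+1}>\pi_{2i+2}\}$ (indices in $\{1,\dots,n-1\}$) and ${\rm altmaj}(\pi)=\sum_{i\in\widehat{D}(\pi)}i$. *)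

From mathcomp Require Import all_boot all_order all_algebra all_fingroup.
Set Implicit Arguments. Unset Strict Implicit. Unset Printing Implicit Defensive.

(* Permutations of {1,...,n} are represented by s : 'S_n (permutations of
   {0,...,n-1}).  The 1-indexed value pi_i (1 <= i <= n) is represented by
   val (s (i-1)); this shift by one preserves all comparisons. *)
Definition pval (n : nat) (s : 'S_n) (i : nat) : nat :=
  match (insub i.-1 : option 'I_n) with Some j => val (s j) | None => 0 end.

Definition in_altdes (n : nat) (s : 'S_n) (i : nat) : bool :=
  if odd i then pval s i.+1 < pval s i else pval s i < pval s i.+1.

Definition altmaj (n : nat) (s : 'S_n) : nat :=
  \sum_(1 <= i < n | in_altdes s i) i.

From mathcomp Require Import all_boot all_order all_algebra all_fingroup.
From mathcomp Require Import zify ring.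
Set Implicit Arguments. Unset Strict Implicit. Unset Printing Implicit Defensive.
Import GRing.Theory.

(* Let rho reverse the first 2m letters of a permutation pi (possible as
   2m <= n).  For 0 < i < 2m, position i of rho pi compares the letters of pi
   at positions 2m - i and 2m + 1 - i in the opposite order, and i has the
   parity of 2m - i, so i is an alternating descent of rho pi iff 2m - i is not
   one of pi.  Positions beyond 2m are untouched, and position 2m contributes
   0 mod 2m.  As 1 + ... + (2m - 1) = -m (mod 2m), this gives
   altmaj(rho pi) = altmaj(pi) + m (mod 2m), so the involution rho exchanges
   the residue classes l and l + m.  Pairing pi with rho pi (exactly one of
   the two has pi_1 < pi_2m) writes the generating function as a sum of
   q^a + q^b with b = a + m (mod 2m), each divisible by 1 + q^m. *)

Lemma sum_reflected_compl_mod (m : nat) (D : pred nat) :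
  \sum_(1 <= i < 2 * m | ~~ D (2 * m - i)) i
    = \sum_(1 <= i < 2 * m | D i) i + m %[mod 2 * m].
Proof.
set d := 2 * m.
set Y := \sum_(1 <= i < d | D i) i.
set Z := \sum_(1 <= i < d | ~~ D i) i.
set A := \sum_(1 <= i < d | ~~ D i) (d - i).
have -> : \sum_(1 <= i < d | ~~ D (d - i)) i = A.
  rewrite big_nat_rev big_mkcond [A]big_mkcond.
  apply: eq_big_nat => i /andP[_ i_ltd].
  have -> : 1 + d - i.+1 = d - i by lia.
  by rewrite subKn // ltnW.
have /dvdnP[k eAZ] : d %| A + Z.
  rewrite -big_split big_nat_cond; apply: dvdn_sum => i /andP[/andP[_ i_ltd] _].
  by rewrite /= subnK ?dvdnn // ltnW.
have eZY : Z + Y = \sum_(1 <= i < d) i by rewrite addnC [RHS](bigID D).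
have eT : \sum_(1 <= i < d) i + m = m * d.
  have <- : \sum_(0 <= i < d) i = \sum_(1 <= i < d) i.
    by case: (posnP d) => [->|d_gt0]; [rewrite !big_geq | rewrite big_ltn].
  rewrite bin2_sum bin2 -mulnA mul2n doubleK; nia.
have eA : m * d + A = k * d + (Y + m) by lia.
by rewrite -(modnMDl m A) eA modnMDl.
Qed.

Lemma sum_geq_eq_mod (d n : nat) (P Q : pred nat) :
  (forall i, d < i -> P i = Q i) ->
  \sum_(d <= i < n | P i) i = \sum_(d <= i < n | Q i) i %[mod d].
Proof.
move=> ePQ; case: (ltnP d n) => [d_ltn|n_led]; last by rewrite !big_geq.
have drop_d R : \sum_(d <= i < n | R i) i = \sum_(d.+1 <= i < n | R i) i %[mod d].
  by rewrite big_ltn_cond //; case: ifP => // _; rewrite modnDl.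
rewrite drop_d [RHS]drop_d big_nat_cond [in RHS]big_nat_cond; congr (_ %% d).
by apply: eq_bigl => i; case/boolP: (_ <= i < n) => //= /andP[/ePQ].
Qed.

Section PositionValues.
Variable n : nat.

Lemma pvalS (s : 'S_n) k (k_ltn : k < n) : pval s k.+1 = val (s (Ordinal k_ltn)).
Proof. by rewrite /pval /= insubT. Qed.

Lemma pval_inj (s : 'S_n) i j : 0 < i <= n -> 0 < j <= n -> i != j ->
  pval s i != pval s j.
Proof.
case: i j => [|i] [|j] // /andP[_ i_le] /andP[_ j_le] neq_ij.
rewrite (pvalS s i_le) (pvalS s j_le) (inj_eq val_inj) (inj_eq perm_inj).
by rewrite -(inj_eq val_inj).
Qed.

End PositionValues.

Section PrefixReversal.
Variables (n d : nat) (d_le : d <= n).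

Definition rev_prefix_fun (i : 'I_n) : 'I_n :=
  if i < d then insubd i (d.-1 - i) else i.

Lemma rev_prefix_funE (i : 'I_n) :
  val (rev_prefix_fun i) = if i < d then d.-1 - i else i.
Proof.
rewrite /rev_prefix_fun; case: ifP => // i_ltd.
by rewrite val_insubd ifT //; lia.
Qed.

Lemma rev_prefix_funK : involutive rev_prefix_fun.
Proof.
move=> i; apply: val_inj; rewrite !rev_prefix_funE.
case: (ltnP i d) => i_d; last by rewrite ltnNge i_d.
by rewrite ifT /=; lia.
Qed.

Definition rev_prefix : 'S_n := perm (inv_inj rev_prefix_funK).

(* [rev_prefix * s] applies [rev_prefix] first: it is [s] read with its first
   [d] positions reversed. *)
Lemma pval_rev_prefix_le (s : 'S_n) i : 0 < i <= d ->
  pval (rev_prefix * s) i = pval s (d.+1 - i).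
Proof.
case: i => // k /andP[_ k_ltd].
have k_ltn : k < n by lia.
have k'_ltn : d.-1 - k < n by lia.
rewrite (_ : d.+1 - k.+1 = (d.-1 - k).+1); last by lia.
rewrite (pvalS _ k_ltn) (pvalS _ k'_ltn) permM permE; congr (val (s _)).
by apply: val_inj; rewrite rev_prefix_funE /= k_ltd.
Qed.

Lemma pval_rev_prefix_gt (s : 'S_n) i : d < i -> pval (rev_prefix * s) i = pval s i.
Proof.
move=> d_lti; rewrite /pval; case: insubP => // j _ ej.
rewrite permM permE; congr (val (s _)); apply: val_inj.
by rewrite rev_prefix_funE ej ifN //; lia.
Qed.

Lemma rev_prefix_flips_ends (s : 'S_n) : 1 < d ->
  (pval (rev_prefix * s) 1 < pval (rev_prefix * s) d) = ~~ (pval s 1 < pval s d).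
Proof.
move=> d_gt1; have d_gt0 := ltnW d_gt1.
rewrite !pval_rev_prefix_le ?d_gt0 ?leqnn // subn1 subSnn.
have : pval s 1 != pval s d.
  by apply: pval_inj; rewrite ?d_gt0 ?d_le ?(leq_trans d_gt0 d_le) ?neq_ltn ?d_gt1.
by case: ltngtP.
Qed.

End PrefixReversal.

Section AltmajShift.
Variables (n m : nat) (dm_le : 2 * m <= n).
Local Notation d := (2 * m).
Local Notation rho := (rev_prefix dm_le).

Lemma in_altdes_rev_prefix_lt (s : 'S_n) i : 0 < i < d ->
  in_altdes (rho * s) i = ~~ in_altdes s (d - i).
Proof.
move=> /andP[i_gt0 i_ltd]; have i_led := ltnW i_ltd.
rewrite /in_altdes !pval_rev_prefix_le ?i_gt0 ?i_led // subSS subSn //.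
rewrite oddB ?oddM //=.
have : pval s (d - i) != pval s (d - i).+1 by apply: pval_inj; lia.
by case: (odd i); case: ltngtP.
Qed.

Lemma in_altdes_rev_prefix_gt (s : 'S_n) i : d < i ->
  in_altdes (rho * s) i = in_altdes s i.
Proof.
by move=> d_lti; rewrite /in_altdes !pval_rev_prefix_gt // (ltn_trans d_lti).
Qed.

Lemma altmaj_split (s : 'S_n) : 0 < d ->
  altmaj s = \sum_(1 <= i < d | in_altdes s i) i + \sum_(d <= i < n | in_altdes s i) i.
Proof. by move=> d_gt0; rewrite /altmaj (big_cat_nat d_gt0 dm_le). Qed.

Lemma altmaj_rev_prefix (s : 'S_n) : 0 < m ->
  altmaj (rho * s) = altmaj s + m %[mod d].
Proof.
move=> m_gt0; have d_gt0 : 0 < d by rewrite muln_gt0.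
have eL : \sum_(1 <= i < d | in_altdes (rho * s) i) i
          = \sum_(1 <= i < d | in_altdes s i) i + m %[mod d].
  rewrite -sum_reflected_compl_mod; congr (_ %% d).
  rewrite big_nat_cond [RHS]big_nat_cond.
  by apply: eq_bigl => i; case/boolP: (_ <= i < d) => //= /in_altdes_rev_prefix_lt.
have eH : \sum_(d <= i < n | in_altdes (rho * s) i) i
          = \sum_(d <= i < n | in_altdes s i) i %[mod d].
  by apply: sum_geq_eq_mod => i /in_altdes_rev_prefix_gt.
by rewrite !altmaj_split // -modnDm eL eH modnDm addnAC.
Qed.

End AltmajShift.

Local Open Scope ring_scope.

Lemma one_add_expr_odd (R : comPzRingType) (y : R) k :
  exists q : R, 1 + y ^+ k.*2.+1 = q * (1 + y).
Proof.
set S := \sum_(i < k.*2.+1) (- y) ^+ i; exists S.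
have := subrX1 (- y) k.*2.+1; rewrite -/S exprNn -signr_odd /= odd_double /=.
move=> e; have -> : S * (1 + y) = - ((- y - 1) * S) by ring.
by rewrite -e; ring.
Qed.

Lemma addX_shift_mod (R : comNzRingType) (m a b : nat) :
  (0 < m)%N -> b = a + m %[mod 2 * m] ->
  exists q : {poly R}, 'X^a + 'X^b = q * (1 + 'X^m).
Proof.
wlog le_ab : a b / (a <= b)%N => [hwlog m_gt0 eab|m_gt0 eab].
  case: (leqP a b) => [|/ltnW] hab; first exact: hwlog.
  have [|q hq] := hwlog b a hab m_gt0; last by exists q; rewrite addrC.
  by rewrite -modnDml eab modnDml -addnA addnn -mul2n modnDr.
set k := ((b - a) %/ (2 * m))%N.
have eb : b = (a + m * k.*2.+1)%N.
  have : (b - a = m %[mod 2 * m])%N.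
    by apply/eqP; rewrite -(eqn_modDl a) subnKC // eab.
  rewrite [(m %% _)%N]modn_small => [ebm|]; last by lia.
  have := divn_eq (b - a) (2 * m); rewrite ebm -/k; lia.
have [q hq] := one_add_expr_odd ('X^m : {poly R}) k.
by exists ('X^a * q); rewrite eb exprD exprM -mulrA -hq; ring.
Qed.

Lemma sum_X_paired_shift (T : finType) (R : comNzRingType) (a : T -> nat)
    (g : T -> T) (P : pred T) (m : nat) :
  (0 < m)%N -> injective g -> (forall t, P (g t) = ~~ P t) ->
  (forall t, a (g t) = a t + m %[mod 2 * m]) ->
  exists q : {poly R}, \sum_t 'X^(a t) = q * (1 + 'X^m).
Proof.
move=> m_gt0 g_inj Pg ag.
rewrite (bigID P) /= [X in _ + X](reindex_inj g_inj) /=.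
rewrite [X in _ + X](eq_bigl P) => [|t]; last by rewrite /= Pg negbK.
rewrite -big_split /=.
apply: (big_ind (fun p : {poly R} => exists q, p = q * (1 + 'X^m))).
- by exists 0; rewrite mul0r.
- by move=> _ _ [q1 ->] [q2 ->]; exists (q1 + q2); rewrite mulrDl.
- by move=> t _; apply: addX_shift_mod.
Qed.

Theorem theorem4p9 (n m : nat) :
  (1 <= n)%N -> (1 <= m)%N -> (m <= n./2)%N ->
  (forall l : nat, (l < m)%N ->
     #|[set s : 'S_n | altmaj s %% (2 * m) == l %% (2 * m)]|%N =
     #|[set s : 'S_n | altmaj s %% (2 * m) == (l + m) %% (2 * m)]|%N)
  /\
  (exists r : {poly int},
     \sum_(s : 'S_n) 'X^(altmaj s) = r * (1 + 'X^m)).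
Proof.
move=> _ m_gt0 m_le_half.
have dm_le : (2 * m <= n)%N by rewrite mul2n -geq_half_double.
have dm_gt1 : (1 < 2 * m)%N by lia.
have shift s := altmaj_rev_prefix dm_le s m_gt0.
split=> [l _|].
  rewrite -[RHS](card_preimset _ (mulgI (rev_prefix dm_le))).
  by apply: eq_card => s; rewrite !inE shift eqn_modDr.
apply: (@sum_X_paired_shift _ _ _ (fun s => rev_prefix dm_le * s)%g
          (fun s => pval s 1 < pval s (2 * m))%N) => // [|s].
- exact: mulgI.
- exact: rev_prefix_flips_ends.
Qed.
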